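(* Let $T,\nu,M_t$ be integers with $M_t\ge1$, $\nu\ge0$, and $T>(\nu+1)M_t$; let $\alpha$ be a primitive element of $\mathbb{F}_{2^T}$ and fix $\mathbf{c}\in\mathbb{F}_{2^T}^{M_t\times1}$. If $\mathbf{g}^{(1)},\dots,\mathbf{g}^{(d)}\in\mathcal{G}$ are such that $\Phi(\mathbf{g}^{(1)}),\dots,\Phi(\mathbf{g}^{(d)})$ are linearly independent over $\mathbb{F}_2$, then $\mathbf{g}^{(1)},\dots,\mathbf{g}^{(d)}$ are linearly independent over $\mathbb{F}_{2^T}$.
   Context: $\Gamma=\{\sum_{t=0}^{\nu}\delta_t\alpha^t:\delta_t\in\mathbb{F}_2\}\subseteq\mathbb{F}_{2^T}$. For $\mathbf{g}=[g_0,\dots,g_{M_t-1}]\in\Gamma^{1\times M_t}$ with $g_k=\sum_{j=0}^{\nu}\delta_{k,j}\alpha^j$, $\Phi(\mathbf{g})=[\delta_{0,0},\dots,\delta_{M_t-1,0}]\in\mathbb{F}_2^{1\times M_t}$. $\mathcal{G}=\{\mathbf{g}\in\Gamma^{1\times M_t}:\mathbf{g}\mathbf{c}=0\}$. *)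

From HB Require Import structures.
From mathcomp Require Import all_boot all_order all_algebra all_field.
Set Implicit Arguments. Unset Strict Implicit. Unset Printing Implicit Defensive.
Import GRing.Theory.
Local Open Scope ring_scope.

Definition gamma_elt (F : fieldType) (alpha : F) (nu : nat)
  (delta : 'I_nu.+1 -> 'F_2) : F :=
  \sum_(t < nu.+1) (val (delta t))%:R * alpha ^+ t.

Definition gvec (F : fieldType) (alpha : F) (nu Mt : nat)
  (delta : 'I_Mt -> 'I_nu.+1 -> 'F_2) : 'rV[F]_Mt :=
  \row_k gamma_elt alpha (delta k).

Definition Phi (nu Mt : nat) (delta : 'I_Mt -> 'I_nu.+1 -> 'F_2) : 'rV['F_2]_Mt :=
  \row_k delta k ord0.

From HB Require Import structures.
From mathcomp Require Import all_boot all_order all_algebra all_field perm.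
Set Implicit Arguments. Unset Strict Implicit. Unset Printing Implicit Defensive.
Import GRing.Theory.
Local Open Scope ring_scope.

(* Choose d columns on which the Phi-matrix is an invertible F_2-matrix.  On the
   same columns the g-matrix has determinant D(alpha), where D in F_2[X] is the
   determinant of the matrix of polynomials sum_t delta_{i,k,t} X^t.  D has
   degree at most d nu <= Mt nu < T, and D(0) is the determinant of the chosen
   Phi-submatrix, so D <> 0.  But alpha is a root of no nonzero F_2-polynomial
   of degree < T: if it were a root of one of degree m, then 0 and all 2^T - 1
   powers of alpha would be F_2-combinations of 1, alpha, ..., alpha^(m-1),
   of which there are only 2^m. *)

Section FpEmbedding.
Variables (p : nat) (R : nzRingType).
Hypothesis pcharRp : p \in [pchar R].

(* The characteristic hypothesis is an argument of [Fp_embed] so that the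
   ring morphism structure of [Fp_embed pcharRp] can be declared canonical. *)
Definition Fp_embed of p \in [pchar R] : 'F_p -> R := fun a => (val a)%:R.
Local Notation phi := (Fp_embed pcharRp).

Lemma Fp_embedE a : phi a = in_alg (pPrimeCharType pcharRp) a.
Proof. by rewrite /= /GRing.scale /= /pprimeChar_scale mulr1. Qed.

Lemma Fp_embed_is_zmod_morphism : zmod_morphism phi.
Proof. by move=> a b; rewrite !Fp_embedE rmorphB. Qed.

Lemma Fp_embed_is_monoid_morphism : monoid_morphism phi.
Proof. by split=> [|a b]; rewrite !Fp_embedE (rmorph1, rmorphM). Qed.

HB.instance Definition _ := GRing.isZmodMorphism.Build 'F_p R phi
  Fp_embed_is_zmod_morphism.
HB.instance Definition _ := GRing.isMonoidMorphism.Build 'F_p R phi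
  Fp_embed_is_monoid_morphism.

End FpEmbedding.
Arguments Fp_embed {p R}.

Lemma prim_root_neq0 (R : nzRingType) n (z : R) : n.-primitive_root z -> z != 0.
Proof.
move=> z_prim; apply/eqP => z0; have := prim_expr_order z_prim.
rewrite z0 expr0n gtn_eqF ?(prim_order_gt0 z_prim) // => /esym/eqP.
by rewrite oner_eq0.
Qed.

Lemma row_free_colsubP (K : fieldType) m n (A : 'M[K]_(m, n)) :
  reflect (exists f : 'I_m -> 'I_n, colsub f A \in unitmx) (row_free A).
Proof.
apply: (iffP idP) => [freeA | [f fA_unit]].
  have fullAt : row_full A^T by rewrite /row_full mxrank_tr.
  by exists (fullrankfun fullAt); rewrite -unitmx_tr trmx_mxsub fullrowsub_unit.
rewrite /row_free eqn_leq rank_leq_row /=.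
rewrite -row_free_unit in fA_unit; rewrite -{1}(eqP fA_unit).
by rewrite -[A in colsub _ A]mulmx1 -mulmx_colsub mxrankM_maxl.
Qed.

Lemma size_det_leq (R : nzRingType) n k (Q : 'M[{poly R}]_n) :
  (forall i j, size (Q i j) <= k.+1)%N -> (size (\det Q) <= (n * k).+1)%N.
Proof.
move=> sizeQ; apply: leq_trans (size_sum _ _ _) _; apply/bigmax_leqP => s _.
have size_prod : (size (\prod_i Q i (s i))%R <= (n * k).+1)%N.
  apply: leq_trans (size_poly_prod_leq _ _) _.
  have sum_le : (\sum_i size (Q i (s i)) <= n * k.+1)%N.
    by rewrite -[n in (_ <= n * _)%N]card_ord -sum_nat_const leq_sum.
  by rewrite cardT size_enum_ord leq_subLR addnS ltnS -mulnS.
by rewrite mulr_sign; case: ifP; rewrite ?size_polyN.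
Qed.

Section PrimitiveElementDegree.
Variables (p T : nat) (F : fieldType) (alpha : F).
Hypotheses (pcharFp : p \in [pchar F])
           (alpha_prim : (p ^ T - 1).-primitive_root alpha).

Local Notation Fp_eval q := (map_poly (Fp_embed pcharFp) q).[alpha].

Definition Fp_span m : seq F :=
  [seq \sum_(i < m) Fp_embed pcharFp (b i) * alpha ^+ i | b : {ffun 'I_m -> 'F_p}].

Lemma size_Fp_span m : size (Fp_span m) = (p ^ m)%N.
Proof.
by rewrite size_map -cardE card_ffun card_Fp ?card_ord // (pcharf_prime pcharFp).
Qed.

Lemma Fp_eval_in_span (q : {poly 'F_p}) m :
  (size q <= m)%N -> Fp_eval q \in Fp_span m.
Proof.
move=> sqm; rewrite (horner_coef_wide _ (leq_trans (eq_leq (size_map_poly _ _)) sqm)).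
apply/mapP; exists [ffun i : 'I_m => q`_i]; first by rewrite mem_enum.
by apply: eq_bigr => i _; rewrite ffunE coef_map.
Qed.

Lemma expr_in_Fp_span (q : {poly 'F_p}) n : q != 0 -> Fp_eval q = 0 ->
  alpha ^+ n \in Fp_span (size q).-1.
Proof.
move=> qn0 q_alpha; rewrite -(hornerXn alpha n) -(map_polyXn (Fp_embed pcharFp)).
rewrite (divp_eq 'X^n q) rmorphD rmorphM hornerD hornerM q_alpha mulr0 add0r.
by apply: Fp_eval_in_span; rewrite -ltnS prednK ?ltn_modp // lt0n size_poly_eq0.
Qed.

Lemma uniq_zero_powers : uniq (0 :: mkseq (fun i => alpha ^+ i) (p ^ T - 1)).
Proof.
rewrite /= map_inj_in_uniq ?iota_uniq ?andbT.
  by apply/mapP => -[i _ /esym/eqP]; rewrite expf_eq0 (negPf (prim_root_neq0 alpha_prim)) andbF.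
move=> i j; rewrite !mem_iota !add0n => /andP[_ ilt] /andP[_ jlt] /eqP.
by rewrite (eq_prim_root_expr alpha_prim) !modn_small // => /eqP.
Qed.

Lemma Fp_root_size_gt (q : {poly 'F_p}) : q != 0 -> Fp_eval q = 0 -> (T < size q)%N.
Proof.
move=> qn0 q_alpha; have p_gt1 := prime_gt1 (pcharf_prime pcharFp).
have powers_in_span :
    {subset 0 :: mkseq (fun i => alpha ^+ i) (p ^ T - 1) <= Fp_span (size q).-1}.
  move=> x; rewrite inE => /predU1P[-> | /mapP[i _ ->]]; last exact: expr_in_Fp_span.
  rewrite -(horner0 alpha) -(rmorph0 (map_poly (Fp_embed pcharFp))).
  by rewrite Fp_eval_in_span ?size_poly0.
have := uniq_leq_size uniq_zero_powers powers_in_span.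
rewrite size_Fp_span /= size_mkseq subn1 prednK ?expn_gt0 ?(ltnW p_gt1) //.
by rewrite leq_exp2l // -ltnS prednK // lt0n size_poly_eq0.
Qed.

Lemma row_free_Fp_eval_mx d n k (P : 'M[{poly 'F_p}]_(d, n)) :
  (forall i j, size (P i j) <= k.+1)%N -> (d * k < T)%N ->
  row_free (map_mx (horner_eval 0) P) ->
  row_free (map_mx (fun q => Fp_eval q) P).
Proof.
move=> sizeP dkT /row_free_colsubP[f P0f_unit]; apply/row_free_colsubP; exists f.
set D := \det (colsub f P).
have D0_neq0 : D.[0] != 0.
  by rewrite -horner_evalE -det_map_mx map_mxsub -unitfE -unitmxE.
have D_neq0 : D != 0 by apply: contraNneq D0_neq0 => ->; rewrite horner0.
have sizeD : (size D <= (d * k).+1)%N by apply: size_det_leq => i j; rewrite mxE.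
have D_alpha_neq0 : Fp_eval D != 0.
  apply/eqP => /(Fp_root_size_gt D_neq0) T_lt.
  by move: sizeD; rewrite leqNgt (leq_ltn_trans dkT T_lt).
rewrite unitmxE unitfE -map_mxsub.
suff -> : map_mx (fun q => Fp_eval q) (colsub f P) =
          map_mx (horner_eval alpha) (map_mx (map_poly (Fp_embed pcharFp)) (colsub f P)).
  by rewrite !det_map_mx.
by apply/matrixP => i j; rewrite !mxE.
Qed.

End PrimitiveElementDegree.

Definition gamma_poly nu (delta : 'I_nu.+1 -> 'F_2) : {poly 'F_2} :=
  \poly_(t < nu.+1) delta (inord t).

Lemma size_gamma_poly nu (delta : 'I_nu.+1 -> 'F_2) :
  (size (gamma_poly delta) <= nu.+1)%N.
Proof. exact: size_poly. Qed.

Lemma gamma_poly_at0 nu (delta : 'I_nu.+1 -> 'F_2) :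
  (gamma_poly delta).[0] = delta ord0.
Proof. by rewrite horner_coef0 coef_poly /=; congr delta; apply: val_inj; rewrite /= inordK. Qed.

Lemma gamma_eltE (F : fieldType) (pchar2 : 2 \in [pchar F]) (alpha : F) nu
    (delta : 'I_nu.+1 -> 'F_2) :
  gamma_elt alpha delta = (map_poly (Fp_embed pchar2) (gamma_poly delta)).[alpha].
Proof.
rewrite (horner_coef_wide _ (leq_trans (eq_leq (size_map_poly _ _)) (size_gamma_poly _))).
by apply: eq_bigr => t _; rewrite coef_map coef_poly ltn_ord inord_val.
Qed.

Theorem lemma7 (T nu Mt d : nat) (F : finFieldType)
  (hF : #|F| = (2 ^ T)%N) (hMt : (1 <= Mt)%N) (hT : ((nu.+1) * Mt < T)%N)
  (alpha : F) (halpha : (2 ^ T - 1)%N.-primitive_root alpha)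
  (c : 'cV[F]_Mt)
  (delta : 'I_d -> 'I_Mt -> 'I_nu.+1 -> 'F_2)
  (hG : forall i : 'I_d, gvec alpha (delta i) *m c = 0)
  (hPhi : row_free (\matrix_(i < d) Phi (delta i))) :
  row_free (\matrix_(i < d) gvec alpha (delta i)).
Proof.
have pchar2 : 2 \in [pchar F] by apply: card_finPcharP hF _.
pose P := \matrix_(i < d, k < Mt) gamma_poly (delta i k).
have d_le_Mt : (d <= Mt)%N by rewrite -(eqP hPhi) rank_leq_col.
have -> : \matrix_(i < d) gvec alpha (delta i) =
          map_mx (fun q => (map_poly (Fp_embed pchar2) q).[alpha]) P.
  by apply/matrixP => i k; rewrite !mxE gamma_eltE.
apply: (row_free_Fp_eval_mx pchar2 halpha (k := nu)) => [i k | | ].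
- by rewrite mxE size_gamma_poly.
- by rewrite (leq_ltn_trans _ hT) // mulnC leq_mul.
- suff -> : map_mx (horner_eval 0) P = \matrix_(i < d) Phi (delta i) by [].
  by apply/matrixP => i k; rewrite !mxE horner_evalE gamma_poly_at0.
Qed.
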